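(* Let $F$ be a field of characteristic zero and let $\mathcal{Q}$ be the additive group of rational numbers. Then the only Schur rings over $\mathcal{Q}$ are the group ring $F[\mathcal{Q}]$ and the symmetric Schur ring $F[\mathcal{Q}]^{\pm}$.
   Context: For finite $C\subseteq G$, $\overline{C}=\sum_{g\in C}g\in F[G]$ and $C^*=\{g^{-1}\mid g\in C\}$. A Schur ring over a group $G$ is an $F$-subspace $\mathfrak{S}=\operatorname{Span}_F\{\overline{C}\mid C\in\mathcal{D}(\mathfrak{S})\}$ of $F[G]$ where $\mathcal{D}(\mathfrak{S})$ is a partition of $G$ into finite sets such that (i) $\{1\}\in\mathcal{D}(\mathfrak{S})$; (ii) $C\in\mathcal{D}(\mathfrak{S})\Rightarrow C^*\in\mathcal{D}(\mathfrak{S})$; (iii) for all $C,D\in\mathcal{D}(\mathfrak{S})$, $\overline{C}\,\overline{D}=\sum_{E}\lambda_{CDE}\overline{E}$ with finitely many nonzero $\lambda_{CDE}\in F$. The group ring $F[G]$ is the Schur ring with partition into singletons; for abelian $G$, the symmetric Schur ring $F[G]^{\pm}$ is the Schur ring with partition $\{\{g,g^{-1}\}\mid g\in G\}$. *)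

From HB Require Import structures.
From mathcomp Require Import all_boot all_order all_algebra.
From mathcomp Require Import finmap.
Set Implicit Arguments. Unset Strict Implicit. Unset Printing Implicit Defensive.
Import Order.TTheory GRing.Theory Num.Theory.
Local Open Scope ring_scope.
Local Open Scope fset_scope.

(* The group G = (Q, +), written additively: identity 0, inverse of g is -g.
   A finite subset C of G is a {fset rat}.  An element of F[G] is represented
   by its coefficient function G -> F. *)

Definition csum (F : fieldType) (C : {fset rat}) : rat -> F :=
  fun g => (g \in C)%:R.

(* \overline{C} \overline{D} = sum_{c in C, d in D} (c + d), as a
   coefficient function. *)
Definition csum_mul (F : fieldType) (C D : {fset rat}) : rat -> F :=
  fun g => \sum_(c <- C) \sum_(d <- D) ((c + d == g)%:R : F).

Definition finv (C : {fset rat}) : {fset rat} := [fset - x | x in C].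

Definition is_partition (P : {fset rat} -> Prop) : Prop :=
  [/\ (forall C, P C -> C != fset0),
      (forall g : rat, exists C, P C /\ g \in C) &
      (forall C C' (g : rat), P C -> P C' -> g \in C -> g \in C' -> C = C')].

(* P is the partition D(S) of a Schur ring S over (Q,+) with coefficients in F. *)
Definition schur_partition (F : fieldType) (P : {fset rat} -> Prop) : Prop :=
  [/\ is_partition P,
      P [fset 0],
      (forall C, P C -> P (finv C)) &
      (forall C D, P C -> P D ->
         exists (Es : seq {fset rat}) (lam : {fset rat} -> F),
           (forall E, E \in Es -> P E) /\
           (forall g, csum_mul F C D g = \sum_(E <- Es) lam E * csum F E g))].

Definition group_ring_partition (C : {fset rat}) : Prop :=
  exists g : rat, C = [fset g].

Definition symmetric_partition (C : {fset rat}) : Prop :=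
  exists g : rat, C = [fset g; - g].

From Pilot Require Import Defs.
From HB Require Import structures.
From mathcomp Require Import all_boot all_order all_algebra.
From mathcomp Require Import finmap zify.
From Stdlib Require Import Classical.
Import Order.TTheory GRing.Theory Num.Theory.
Local Open Scope ring_scope.

Set Implicit Arguments. Unset Strict Implicit. Unset Printing Implicit Defensive.

(* In characteristic 0 the Schur ring axioms say that, for classes C and D,
   the number of ways of writing g = c + d with c in C and d in D depends only
   on the class of g; iterating, so does the number of ways of writing g as a
   sum of p elements of C.  Modulo a prime p this number is a coefficient of a
   p-th power, and the Frobenius identity (sum_c X^c)^p = sum_c X^(p c) shows
   that it is 1 at p x for x in C and 0 outside p C: every element of the class
   of p x is p times an element of the class of x.  The subgroup generated by a
   class C is cyclic, say t Z, and is a union of classes; if q t lies in the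
   class of t, then t = q z with z in the class of t, so q is a unit and every
   class is contained in some {x, -x}.  Finally, if some nonzero x has class
   {x}, the class of x + y cannot contain x - y, so it is {x + y}, and then
   every class is a singleton; otherwise every class is {x, -x}. *)

Definition npairs (C D : {fset rat}) (g : rat) : nat :=
  (\sum_(c <- C) \sum_(d <- D) ((c + d)%R == g : nat))%N.

Lemma npairs_gt0 C D g :
  (0 < npairs C D g)%N <-> exists c d, [/\ c \in C, d \in D & g = c + d].
Proof.
rewrite /npairs lt0n sum_nat_seq_neq0; split.
  case/hasP => c cC /=; rewrite sum_nat_seq_neq0 => /hasP [d dD] /=.
  by rewrite eqb0 negbK => /eqP <-; exists c, d.
case=> c [d [cC dD ->]]; apply/hasP; exists c => //=.
by rewrite sum_nat_seq_neq0; apply/hasP; exists d; rewrite //= eqxx.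
Qed.

Lemma pchar0_natr_inj (F : fieldType) :
  [pchar F] =i pred0 -> injective (fun n : nat => n%:R : F).
Proof.
move=> F0 m n; wlog le_mn : m n / (m <= n)%N.
  by move=> W; case: (leqP m n) => [/W // | /ltnW /W W' /esym /W' ->].
rewrite /= -(subnKC le_mn) natrD -{1}[m%:R]addr0 => /addrI /esym /eqP.
by rewrite ((pcharf0P F).1 F0) => /eqP ->; rewrite addn0.
Qed.

Definition nat_schur_partition (P : {fset rat} -> Prop) : Prop :=
  [/\ is_partition P, P [fset 0]%fset, (forall C, P C -> P (Defs.finv C)) &
      forall C D E g h, P C -> P D -> P E -> g \in E -> h \in E ->
        npairs C D g = npairs C D h].

Lemma schur_partition_nat (F : fieldType) P :
  [pchar F] =i pred0 -> schur_partition F P -> nat_schur_partition P.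
Proof.
move=> F0 [partP P0 Pinv Pmul]; split => // C D E g h PC PD PE gE hE.
have [Es [lam [PEs csumE]]] := Pmul C D PC PD.
have csum_mulE x : csum_mul F C D x = (npairs C D x)%:R.
  by rewrite /csum_mul /npairs natr_sum; apply: eq_bigr => c _; rewrite natr_sum.
apply: (pchar0_natr_inj F0); rewrite /= -!csum_mulE !csumE.
apply: eq_big_seq => E' /PEs PE'; rewrite /csum; have [_ _ uniqP] := partP.
suff -> : (g \in E') = (h \in E') by [].
apply/idP/idP => [gE' | hE'].
  by rewrite (uniqP _ _ _ PE' PE gE' gE).
by rewrite (uniqP _ _ _ PE' PE hE' hE).
Qed.

Definition convn (f : rat -> nat) (D : {fset rat}) (g : rat) : nat :=
  (\sum_(d <- D) f (g - d)%R)%N.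

Lemma convn_neq0 f D g :
  convn f D g != 0%N -> exists2 d, d \in D & f (g - d) != 0%N.
Proof. by rewrite /convn sum_nat_seq_neq0 => /hasP [d dD /= h]; exists d. Qed.

Lemma sum_eq_mem (C : {fset rat}) x : (\sum_(c <- C) (c == x : nat))%N = (x \in C).
Proof.
rewrite -(count_uniq_mem _ (fset_uniq C)) -sum1_count [RHS]big_mkcond /=.
by apply: eq_bigr => c _; case: (_ == _).
Qed.

Lemma npairs_convn E D g : npairs E D g = convn (fun x => (x \in E : nat)) D g.
Proof.
rewrite /npairs /convn exchange_big /=; apply: eq_bigr => d _.
by rewrite -sum_eq_mem; apply: eq_bigr => c _; rewrite -(inj_eq (addIr (- d))) addrK.
Qed.

Fixpoint nsums (C : {fset rat}) (k : nat) : rat -> nat :=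
  if k is k'.+1 then convn (nsums C k') C else fun g => (g == 0 : nat).

Fixpoint sumset (C : {fset rat}) (k : nat) : {fset rat} :=
  if k is k'.+1 then [fset (a + c)%R | a in sumset C k', c in C]%fset
  else [fset 0]%fset.

Lemma nsums_neq0 C k g : nsums C k g != 0%N -> g \in sumset C k.
Proof.
elim: k g => [|k IH] g /=; first by case: (eqVneq g 0) => [-> _|]; rewrite ?inE.
case/convn_neq0 => c cC /IH h; rewrite -(subrK c g).
by apply/imfset2P; exists (g - c) => //; exists c.
Qed.

(* [d] clears the denominators and [B] bounds from below, so that the
   exponents [d c - B] below are natural numbers. *)
Definition lattice_bound (s : seq rat) (d B : int) : Prop :=
  forall c, c \in s -> exists2 z : int, d%:~R * c = z%:~R & B <= z.

Lemma lattice_bound_exists (s : seq rat) : exists d B, 0 < d /\ lattice_bound s d B.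
Proof.
elim: s => [|a s [d [B [d_gt0 sdB]]]]; first by exists 1, 0.
exists (d * denq a), (Order.min (B * denq a) (d * numq a)); split.
  by rewrite mulr_gt0 // denq_gt0.
move=> c; rewrite inE => /predU1P [-> | /sdB [z ez Bz]].
  exists (d * numq a); last by rewrite ge_min lexx orbT.
  by rewrite !intrM numqE -mulrA [(denq a)%:~R * a]mulrC.
exists (z * denq a); first by rewrite !intrM -ez mulrAC.
by rewrite ge_min; apply/orP; left; have := denq_gt0 a; nia.
Qed.

Section LatticePoly.

Variables (C : {fset rat}) (d B : int).
Hypotheses (d_gt0 : 0 < d) (CdB : lattice_bound C d B).

Let d_neq0 : d%:~R != 0 :> rat.
Proof. by rewrite intr_eq0 lt0r_neq0. Qed.

Lemma nsums_lattice k g :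
  nsums C k g != 0%N -> exists2 z : int, d%:~R * g = z%:~R & k%:Z * B <= z.
Proof.
elim: k g => [|k IH] g /=.
  by case: (eqVneq g 0) => [-> _|] //; exists 0; rewrite ?mulr0 ?mul0r.
case/convn_neq0 => c /CdB [zc ec Bzc] /IH [z ez Bz].
exists (z + zc); first by rewrite intrD -ez -ec -mulrDr subrK.
by move: Bz Bzc; lia.
Qed.

Definition lattice_exp (g : rat) : nat := absz (Num.floor (d%:~R * g) - B)%R.

Lemma lattice_expE g z : d%:~R * g = z%:~R -> lattice_exp g = absz (z - B)%R.
Proof. by rewrite /lattice_exp => ->; rewrite intrKfloor. Qed.

Lemma lattice_exp_inj : {in C &, injective lattice_exp}.
Proof.
move=> x y /CdB [zx ex Bx] /CdB [zy ey By].
rewrite (lattice_expE ex) (lattice_expE ey) => exy.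
by apply: (mulfI d_neq0); rewrite ex ey; congr intmul; move: exy Bx By; lia.
Qed.

Definition lattice_poly (R : nzRingType) : {poly R} :=
  \sum_(c <- C) 'X^(lattice_exp c).

Lemma coef_lattice_poly_exp (R : nzRingType) k g z :
  d%:~R * g = z%:~R -> k%:Z * B <= z ->
  (nsums C k g)%:R = (lattice_poly R ^+ k)`_(absz (z - k%:Z * B)%R).
Proof.
elim: k g z => [|k IH] g z egz Bz /=.
  rewrite expr0 coef1 mul0r subr0 absz_eq0 -(intr_eq0 rat) -egz.
  by rewrite mulf_eq0 (negbTE d_neq0).
rewrite /convn natr_sum exprSr /lattice_poly mulr_sumr coef_sum.
apply: eq_big_seq => c cC; have [zc ec Bzc] := CdB cC.
rewrite (lattice_expE ec) coefMXn.
have egc : d%:~R * (g - c) = (z - zc)%:~R by rewrite mulrBr egz ec intrB.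
case: ltnP => hlt.
  case: (eqVneq (nsums C k (g - c)) 0%N) => [-> // | /nsums_lattice [z' e' Bz']].
  have zz : z' = z - zc by apply: (@intr_inj rat); rewrite -e' egc.
  by move: hlt Bz' Bz Bzc; rewrite zz; lia.
have Bk : k%:Z * B <= z - zc by move: hlt Bz Bzc; lia.
by rewrite (IH _ _ egc Bk); congr (_ `_ _); move: hlt Bz Bzc Bk; lia.
Qed.

Lemma lattice_poly_expp p :
  prime p -> lattice_poly 'F_p ^+ p = \sum_(c <- C) 'X^(lattice_exp c * p).
Proof.
move=> p_pr; have chp : p \in [pchar {poly 'F_p}] by rewrite pchar_poly pchar_Fp.
rewrite -(pFrobenius_autE chp) rmorph_sum; apply: eq_bigr => c _.
by rewrite /= pFrobenius_autE -exprM mulnC.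
Qed.

Lemma nsums_mulp p x :
  prime p -> x \in C -> (nsums C p (p%:R * x))%:R = 1 :> 'F_p.
Proof.
move=> p_pr xC; have [zx ex Bx] := CdB xC.
have epx : d%:~R * (p%:R * x) = (p%:Z * zx)%:~R by rewrite mulrCA ex intrM.
rewrite (coef_lattice_poly_exp _ epx); last by nia.
rewrite lattice_poly_expp // coef_sum.
have -> : absz (p%:Z * zx - p%:Z * B)%R = (lattice_exp x * p)%N.
  by rewrite (lattice_expE ex); nia.
rewrite (eq_big_seq (fun c => (c == x : nat)%:R)) => [|c cC]; last first.
  by rewrite coefXn eqn_pmul2r ?prime_gt0 // (inj_in_eq lattice_exp_inj) // eq_sym.
by rewrite -natr_sum sum_eq_mem xC.
Qed.

Lemma nsums_modp p g :
  prime p -> (nsums C p g)%:R != 0 :> 'F_p -> exists2 c, c \in C & g = p%:R * c.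
Proof.
move=> p_pr nz.
have /nsums_lattice [z ez Bz] : nsums C p g != 0%N by apply: contraNneq nz => ->.
rewrite (coef_lattice_poly_exp _ ez Bz) lattice_poly_expp // coef_sum in nz.
have /hasP [c cC /eqP ezc] : has (fun c => absz (z - p%:Z * B)%R == (lattice_exp c * p)%N) C.
  apply: contraTT nz => /hasPn none; rewrite negbK big_seq big1 // => c cC.
  by rewrite coefXn (negbTE (none c cC)).
have [w ec Bw] := CdB cC; rewrite (lattice_expE ec) in ezc.
have zE : z = p%:Z * w by move: ezc Bz Bw; nia.
by exists c => //; apply: (mulfI d_neq0); rewrite ez mulrCA ec zE intrM.
Qed.

End LatticePoly.

Inductive zspan (C : {fset rat}) : rat -> Prop :=
| zspan0 : zspan C 0
| zspanD a c : zspan C a -> c \in C -> zspan C (a + c)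
| zspanB a c : zspan C a -> c \in C -> zspan C (a - c).

Section ZSpan.

Variable C : {fset rat}.

Lemma mem_zspan c : c \in C -> zspan C c.
Proof. by move=> cC; rewrite -[c]add0r; apply: zspanD cC; apply: zspan0. Qed.

Lemma zspanDl a b : zspan C a -> zspan C b -> zspan C (a + b).
Proof.
move=> za; elim=> [|x c _ IH cC|x c _ IH cC]; rewrite ?addr0 ?addrA //.
  exact: zspanD.
exact: zspanB.
Qed.

Lemma zspanN a : zspan C a -> zspan C (- a).
Proof.
elim=> [|x c _ IH cC|x c _ IH cC]; rewrite ?oppr0 ?opprD ?opprK.
- exact: zspan0.
- exact: zspanB.
- exact: zspanD.
Qed.

Lemma zspanMz (q : int) a : zspan C a -> zspan C (q%:~R * a).
Proof.
move=> za; have zspanMn n : zspan C (a *+ n).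
  by elim: n => [|n IH]; rewrite ?mulr0n ?mulrS; [exact: zspan0 | exact: zspanDl].
by rewrite mulrzl; case: q => n; [exact: zspanMn | exact/zspanN/zspanMn].
Qed.

Lemma zspan_min (H : rat -> Prop) :
  H 0 -> (forall a b, H a -> H b -> H (a + b)) -> (forall a, H a -> H (- a)) ->
  (forall c, c \in C -> H c) -> forall h, zspan C h -> H h.
Proof.
move=> H0 HD HN HC h; elim=> // a c _ Ha cC; first exact: HD (HC c cC).
exact: HD (HN _ (HC c cC)).
Qed.

End ZSpan.

Lemma rat_bezout (a b : rat) :
  exists t, [/\ exists u v : int, t = u%:~R * a + v%:~R * b,
                exists q : int, a = q%:~R * t & exists r : int, b = r%:~R * t].
Proof.
pose D : rat := (denq a * denq b)%:~R.
have D_neq0 : D != 0 by rewrite intr_eq0 mulf_neq0 ?denq_neq0.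
pose m := numq a * denq b; pose n := numq b * denq a.
have mE : m%:~R = a * D by rewrite /m /D !intrM numqE mulrA.
have nE : n%:~R = b * D by rewrite /n /D !intrM numqE -mulrA [_ * (denq a)%:~R]mulrC.
have [u [v uvE]] := Bezoutz m n.
have /dvdzP [q mq] := dvdz_gcdl m n; have /dvdzP [r nr] := dvdz_gcdr m n.
exists ((gcdz m n)%:~R / D); split.
- by exists u, v; rewrite -uvE intrD (intrM _ u) (intrM _ v) mE nE !mulrA -mulrDl mulfK.
- by exists q; rewrite mulrA -intrM -mq mE mulfK.
- by exists r; rewrite mulrA -intrM -nr nE mulfK.
Qed.

Lemma zspan_seq_cyclic C (s : seq rat) : {subset s <= C} ->
  exists t, zspan C t /\ {in s, forall c, exists q : int, c = q%:~R * t}.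
Proof.
elim: s => [_|a s IH sC]; first by exists 0; split => //; exact: zspan0.
have [|ts [zts sMul]] := IH; first by move=> c cs; apply: sC; rewrite inE cs orbT.
have [t [[u [v tE]] [q aE] [r tsE]]] := rat_bezout a ts.
exists t; split.
  by rewrite tE; apply: zspanDl; apply: zspanMz => //; apply/mem_zspan/sC/mem_head.
move=> c; rewrite inE => /predU1P [-> | /sMul [q' ->]]; first by exists q.
by exists (q' * r); rewrite tsE intrM mulrA.
Qed.

Lemma zspan_cyclic C x : x \in C -> x != 0 -> exists t,
  [/\ t != 0, zspan C t & forall h, zspan C h -> exists q : int, h = q%:~R * t].
Proof.
move=> xC x_neq0; have [t [zt Cmul]] := @zspan_seq_cyclic C C (fun _ => id).
have spanMul : forall h, zspan C h -> exists q : int, h = q%:~R * t.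
  apply: (@zspan_min C (fun h => exists q : int, h = q%:~R * t))
    => [|_ _ [q1 ->] [q2 ->]|_ [q ->]|//].
  - by exists 0; rewrite mul0r.
  - by exists (q1 + q2); rewrite intrD mulrDl.
  - by exists (- q); rewrite intrN mulNr.
exists t; split => //; apply: contraNneq x_neq0 => t0.
by have [q ->] := Cmul x xC; rewrite t0 mulr0.
Qed.

Lemma mem_finv (C : {fset rat}) x : (x \in Defs.finv C) = (- x \in C).
Proof.
apply/imfsetP/idP => [[y /= yC ->] | NxC]; first by rewrite opprK.
by exists (- x); rewrite ?opprK.
Qed.

Section SchurClasses.

Variable P : {fset rat} -> Prop.
Hypothesis schurP : nat_schur_partition P.

Definition same_class x y := exists E, [/\ P E, x \in E & y \in E].

Definition class_fun (f : rat -> nat) := forall x y, same_class x y -> f x = f y.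

Definition singleton_class x := forall y, same_class x y -> y = x.

Lemma class_exists g : exists2 E, P E & g \in E.
Proof. by case: schurP => [[_ ex _] _ _ _]; have [E []] := ex g; exists E. Qed.

Lemma class_uniq E E' g : P E -> P E' -> g \in E -> g \in E' -> E = E'.
Proof. by case: schurP => [[_ _ uniqP] _ _ _]; apply: uniqP. Qed.

Lemma same_classC x y : same_class x y -> same_class y x.
Proof. by case=> E [PE xE yE]; exists E. Qed.

Lemma mem_class E x y : P E -> x \in E -> same_class x y -> y \in E.
Proof. by move=> PE xE [E' [PE' xE' yE']]; rewrite (class_uniq PE PE' xE xE'). Qed.

Lemma same_classN x y : same_class x y -> same_class (- x) (- y).
Proof.
case: schurP => _ _ Pinv _ [E [PE xE yE]]; exists (Defs.finv E).
by split; rewrite ?mem_finv ?opprK //; exact: Pinv.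
Qed.

Lemma same_class0 y : same_class 0 y -> y = 0.
Proof. by case: schurP => _ P0 _ _ /(mem_class P0 (fset11 0)); rewrite inE => /eqP. Qed.

Lemma npairs_class C D g h :
  P C -> P D -> same_class g h -> npairs C D g = npairs C D h.
Proof. by case: schurP => _ _ _ npairsP PC PD [E [PE gE hE]]; apply: npairsP PE _ _. Qed.

Lemma same_class_add a b g : same_class (a + b) g ->
  exists c d, [/\ same_class a c, same_class b d & g = c + d].
Proof.
move=> abg; have [Ea PEa aE] := class_exists a; have [Eb PEb bE] := class_exists b.
have : (0 < npairs Ea Eb (a + b))%N by apply/npairs_gt0; exists a, b.
rewrite (npairs_class PEa PEb abg) => /npairs_gt0 [c [d [cE dE ->]]].
by exists c, d; split => //; [exists Ea | exists Eb].
Qed.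

Lemma class_fun_convn D f (S : {fset rat}) : P D ->
  (forall g, f g != 0%N -> g \in S) -> class_fun f -> class_fun (convn f D).
Proof.
move=> PD; have [n] := ubnP #|`S|; elim: n S f => // n IH S f ltSn suppf fP.
case: (eqVneq S fset0) => [S0 | /fset0Pn [h hS]].
  have f0 g : f g = 0%N by apply/eqP; apply: contraT => /suppf; rewrite S0 inE.
  by move=> x y _; rewrite /convn !big1 // => d _; rewrite f0.
have [E PE hE] := class_exists h.
(* [f = f' + f h * 1_E], and convolving [1_E] with [D] gives [npairs E D]. *)
pose f' g := if g \in E then 0%N else f g.
have f'P : class_fun f'.
  move=> x y xy; rewrite /f'; case: ifP => xE; first by rewrite (mem_class PE xE xy).
  case: ifP => yE; last exact: fP.
  by rewrite (mem_class PE yE (same_classC xy)) in xE.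
have suppf' g : f' g != 0%N -> g \in (S `\ h)%fset.
  rewrite /f'; case: ifP => // gE /suppf gS; rewrite !inE gS andbT.
  by apply: contraFneq gE => ->.
have convnE g : convn f D g = (convn f' D g + f h * npairs E D g)%N.
  rewrite npairs_convn /convn big_distrr -big_split /=; apply: eq_bigr => d _.
  rewrite /f'; case: ifP => gdE; last by rewrite muln0 addn0.
  by rewrite muln1 (fP h (g - d)) //; exists E.
have f'conv : class_fun (convn f' D).
  by apply: (IH (S `\ h)%fset) => //; move: ltSn; rewrite (cardfsD1 h S) hS.
by move=> x y xy; rewrite !convnE (f'conv x y xy) (npairs_class PE PD xy).
Qed.

Lemma class_fun_nsums C k : P C -> class_fun (nsums C k).
Proof.
move=> PC; elim: k => [|k IH] /=; last exact: class_fun_convn PC (@nsums_neq0 C k) IH.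
move=> x y xy; congr nat_of_bool; apply/eqP/eqP => [x0 | y0]; apply: same_class0.
  by rewrite -x0.
by rewrite -y0; apply: same_classC.
Qed.

Lemma same_class_mulp p x y : prime p -> same_class (p%:R * x) y ->
  exists2 z, same_class x z & y = p%:R * z.
Proof.
move=> p_pr pxy; have [C PC xC] := class_exists x.
have [d [B [d_gt0 CdB]]] := lattice_bound_exists C.
have : (nsums C p y)%:R != 0 :> 'F_p.
  by rewrite -(class_fun_nsums p PC pxy) (nsums_mulp d_gt0 CdB p_pr xC) oner_neq0.
by case/(nsums_modp d_gt0 CdB p_pr) => c cC ->; exists c => //; exists C.
Qed.

Lemma same_class_muln n x y : (0 < n)%N -> same_class (n%:R * x) y ->
  exists2 z, same_class x z & y = n%:R * z.
Proof.
elim/ltn_ind: n x y => n IH x y n_gt0 nxy.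
have [n_le1 | n_gt1] := leqP n 1.
  have n1 : n = 1%N by apply/eqP; rewrite eqn_leq n_le1 n_gt0.
  by move: nxy; rewrite n1 mul1r => nxy; exists y; rewrite ?mul1r.
have [p p_pr /dvdnP [m nE]] : exists2 p, prime p & (p %| n)%N.
  by exists (pdiv n); [exact: pdiv_prime | exact: pdiv_dvd].
have m_gt0 : (0 < m)%N by move: n_gt0; rewrite nE muln_gt0 => /andP [].
have m_lt_n : (m < n)%N by rewrite nE ltn_Pmulr // prime_gt1.
rewrite nE natrM -mulrA mulrCA in nxy.
have [w xw ->] := same_class_mulp p_pr nxy.
have [z xz ->] := IH m m_lt_n x w m_gt0 xw.
by exists z => //; rewrite nE natrM -mulrA mulrCA.
Qed.

Lemma same_class_mulz (n : int) x y : n != 0 -> same_class (n%:~R * x) y ->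
  exists2 z, same_class x z & y = n%:~R * z.
Proof.
case: n => n n_neq0 nxy.
  by apply: same_class_muln nxy; rewrite lt0n; apply: contraNneq n_neq0 => ->.
move: nxy; rewrite NegzE intrN mulNr => /same_classN; rewrite opprK.
by case/same_class_muln => // z xz yE; exists z; rewrite // mulNr -yE opprK.
Qed.

Lemma same_class_zspan C x y : P C -> same_class x y -> zspan C x -> zspan C y.
Proof.
move=> PC xy zx; elim: zx y xy => [|a c _ IH cC|a c _ IH cC] y.
- by move/same_class0 ->; exact: zspan0.
- case/same_class_add => a' [c' [aa' cc' ->]].
  exact: zspanD (IH _ aa') (mem_class PC cC cc').
- case/same_class_add => a' [c' [aa' /same_classN cc' ->]].
  rewrite opprK in cc'; rewrite -[c']opprK.
  exact: zspanB (IH _ aa') (mem_class PC cC cc').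
Qed.

Lemma same_class_generator C t y : P C -> t != 0 -> zspan C t ->
  (forall h, zspan C h -> exists q : int, h = q%:~R * t) ->
  same_class t y -> y = t \/ y = - t.
Proof.
move=> PC t_neq0 zt tmul ty.
have [q yE] := tmul y (same_class_zspan PC ty zt).
have q_neq0 : q != 0.
  apply: contraNneq t_neq0 => q0.
  by move: ty; rewrite yE q0 mul0r => /same_classC /same_class0 ->.
move: (same_classC ty); rewrite yE => /(same_class_mulz q_neq0) [z tz tE].
have [r zE] := tmul z (same_class_zspan PC tz zt).
have rq1 : r * q = 1.
  apply: (@intr_inj rat); apply: (mulIf t_neq0).
  by rewrite [r * q]mulrC intrM -mulrA -zE -tE mul1r.
by case/orP: (intUnitRing.unitzPl rq1) => /eqP q1; [left | right];
  rewrite q1 ?mul1r ?mulN1r.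
Qed.

Lemma same_class_pm x y : same_class x y -> y = x \/ y = - x.
Proof.
move=> xy; have [x0 | x_neq0] := eqVneq x 0.
  by left; rewrite x0; apply: same_class0; rewrite -x0.
have [C PC xC] := class_exists x.
have [t [t_neq0 zt tmul]] := zspan_cyclic xC x_neq0.
have [m xE] := tmul x (mem_zspan xC).
have m_neq0 : m != 0 by apply: contraNneq x_neq0 => m0; rewrite xE m0 mul0r.
move: xy; rewrite xE => /(same_class_mulz m_neq0) [z tz ->].
by case: (same_class_generator PC t_neq0 zt tmul tz) => ->; [left | right; rewrite mulrN].
Qed.

Lemma singleton_classD a b :
  singleton_class a -> singleton_class b -> singleton_class (a + b).
Proof. by move=> sa sb g /same_class_add [c [d [/sa -> /sb -> ->]]]. Qed.

Lemma singleton_classN a : singleton_class a -> singleton_class (- a).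
Proof. by move=> sa y /same_classN; rewrite opprK => /sa <-; rewrite opprK. Qed.

Lemma singleton_class_all x : x != 0 -> singleton_class x -> forall y, singleton_class y.
Proof.
move=> x_neq0 sx y; rewrite -[y](addKr x).
apply: singleton_classD (singleton_classN sx) _ => g xyg.
have [c [d [/sx -> yd gE]]] := same_class_add xyg.
case: (same_class_pm xyg) => // gN; case: (same_class_pm yd) => dE; rewrite gE dE //.
move: gN; rewrite gE dE opprD => /addIr /eqP.
by rewrite -addr_eq0 -mulr2n mulrn_eq0 (negbTE x_neq0).
Qed.

Lemma class_eq1 E g : singleton_class g -> P E -> g \in E -> E = [fset g]%fset.
Proof.
move=> sg PE gE; apply/fsetP => y; rewrite inE.
by apply/idP/eqP => [yE | ->] //; apply: sg; exists E.
Qed.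

Lemma class_eq_pm E g : (forall x, x != 0 -> ~ singleton_class x) ->
  P E -> g \in E -> E = [fset g; - g]%fset.
Proof.
move=> nosingle PE gE; apply/fsetP => y; rewrite !inE.
apply/idP/orP => [yE | [/eqP -> // | /eqP ->]].
  have gy : same_class g y by exists E.
  by case: (same_class_pm gy) => ->; [left | right]; rewrite eqxx.
have [g0 | g_neq0] := eqVneq g 0; first by rewrite g0 oppr0 -g0.
case: (boolP (- g \in E)) => // NgE; exfalso; apply: (nosingle g g_neq0) => z gz.
case: (same_class_pm gz) => // zE.
by rewrite -zE (mem_class PE gE gz) in NgE.
Qed.

Lemma partition_classesE (S : rat -> {fset rat}) :
  (forall E g, P E -> g \in E -> E = S g) -> forall C, P C <-> exists g, C = S g.
Proof.
move=> PS C; split => [PC | [g ->]].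
  case: schurP => [[nonempty _ _] _ _ _]; have /fset0Pn [g gC] := nonempty C PC.
  by exists g; exact: PS.
by have [E PE gE] := class_exists g; rewrite -(PS E g PE gE).
Qed.

End SchurClasses.

Theorem corollary4p2 (F : fieldType) (charF0 : [pchar F] =i pred0)
    (P : {fset rat} -> Prop) :
  schur_partition F P ->
  (forall C, P C <-> group_ring_partition C) \/
  (forall C, P C <-> symmetric_partition C).
Proof.
move=> /(schur_partition_nat charF0) schurP.
have [[x [x_neq0 sx]] | no_single] := classic (exists x, x != 0 /\ singleton_class P x).
  left; apply: (@partition_classesE _ schurP (fun g => [fset g]%fset)) => E g PE gE.
  exact: class_eq1 (singleton_class_all schurP x_neq0 sx (y := g)) PE gE.
right; apply: (@partition_classesE _ schurP (fun g => [fset g; - g]%fset)) => E g PE gE.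
by apply: (class_eq_pm schurP _ PE gE) => y y_neq0 sy; apply: no_single; exists y.
Qed.
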